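(* In the HTLC setting described in the context, $\mathcal{B}$ cannot bribe the miners in this manner (i.e. make it a subgame perfect equilibrium for all miners to include unrelated transactions until round $T$ and include $tx^{h}_{\mathcal{B}}$ in round $T$ by offering a fee $f^{h}_{\mathcal{B}}>\frac{f^{h}_{\mathcal{A}}-f}{\lambda_{\min}}+f$) if $\mathcal{A}$'s transaction $tx^{h}_{\mathcal{A}}$ offers a fee $f^{h}_{\mathcal{A}}>\lambda_{\min}\,(v^{\mathrm{dep}}-f)+f$.
   Context: Blockchain model: $n$ miners; miner $i$ has mining power $\lambda_i>0$, $\sum_i\lambda_i=1$, $\lambda_{\min}=\min_i\lambda_i$. Each round exactly one miner is chosen, miner $i$ with probability $\lambda_i$, and creates a block containing one transaction of her choice, receiving its fee. An unrelated transaction offering base fee $f$ is always available. A contract can be redeemed at most once. Miners are rational, non-myopic, with perfect information. HTLC: a contract holding $v^{\mathrm{dep}}$ tokens initiated in block $b_j$, with digest $dig_a=H(pre_a)$ and timeout $T$, redeemable via htlc-A (signature of $\mathcal{A}$ and $pre_a$; any block) or htlc-B (signature of $\mathcal{B}$; only at least $T$ blocks after initiation). $\mathcal{A}$ publishes in the first round $tx^{h}_{\mathcal{A}}$ redeeming via htlc-A with fee $f^{h}_{\mathcal{A}}$; $\mathcal{B}$'s bribing transaction $tx^{h}_{\mathcal{B}}$ redeems via htlc-B and its fee $f^{h}_{\mathcal{B}}$ cannot exceed the contract's tokens $v^{\mathrm{dep}}$. The HTLC game has $T$ rounds creating $b_{j+1},\dots,b_{j+T}$; a miner can include an unrelated transaction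 in any round, $tx^{h}_{\mathcal{A}}$ in any round while the HTLC is unredeemed, and $tx^{h}_{\mathcal{B}}$ only in round $T$ while the HTLC is unredeemed. *)

From mathcomp Require Import all_boot all_order all_algebra.
From mathcomp Require Import reals.
Unset Printing Implicit Defensive.
Import Order.TTheory GRing.Theory Num.Theory.
Local Open Scope ring_scope.

Inductive act := Unrel | TxA | TxB.

Definition act_eqb (a b : act) : bool :=
  match a, b with
  | Unrel, Unrel | TxA, TxA | TxB, TxB => true
  | _, _ => false end.

Definition feasible (T k : nat) (redeemed : bool) (a : act) : bool :=
  match a with
  | Unrel => true
  | TxA => ~~ redeemed
  | TxB => ~~ redeemed && (k == T)
  end.

Definition fee {R : realType} (f fA fB : R) (a : act) : R :=
  match a with Unrel => f | TxA => fA | TxB => fB end.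

Definition next_state (redeemed : bool) (a : act) : bool :=
  redeemed || ~~ act_eqb a Unrel.

(* A (pure, Markov) strategy of one miner: round -> redeemed? -> action. *)
Definition mstrat := nat -> bool -> act.
Definition profile (n : nat) := 'I_n -> mstrat.

Definition feasible_strat (T : nat) (s : mstrat) : Prop :=
  forall k r, feasible T k r (s k r).

Definition feasible_profile (n T : nat) (sigma : profile n) : Prop :=
  forall j, feasible_strat T (sigma j).

(* Expected total fee of miner i over the next m rounds, starting in round k
   with redemption state r, when the profile sigma is played; in every round
   miner j is selected with probability lam j. *)
Fixpoint value {R : realType} (n : nat) (lam : 'I_n -> R) (f fA fB : R)
    (sigma : profile n) (i : 'I_n) (m k : nat) (r : bool) : R :=
  match m with
  | 0 => 0
  | m'.+1 =>
      \sum_(j < n) lam j *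
        ((if j == i then fee f fA fB (sigma j k r) else 0)
         + value n lam f fA fB sigma i m' k.+1 (next_state r (sigma j k r)))
  end.

Definition deviate (n : nat) (sigma : profile n) (i : 'I_n) (s : mstrat)
  : profile n := fun j => if j == i then s else sigma j.

(* Subgames start at the beginning of a round k (1 <= k <= T) in a reachable
   redemption state (the HTLC is unredeemed at the start of round 1).  The
   game has rounds 1..T, so from round k there are T - k + 1 rounds left. *)
Definition reachable (k : nat) (r : bool) : bool := (1 < k)%N || ~~ r.

Definition is_SPE {R : realType} (n T : nat) (lam : 'I_n -> R) (f fA fB : R)
    (sigma : profile n) : Prop :=
  feasible_profile n T sigma /\
  forall (k : nat) (r : bool), (1 <= k <= T)%N -> reachable k r ->
  forall (i : 'I_n) (s : mstrat), feasible_strat T s ->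
    value n lam f fA fB (deviate n sigma i s) i (T - k).+1 k r
      <= value n lam f fA fB sigma i (T - k).+1 k r.

Definition bribe_profile (n T : nat) : profile n :=
  fun _ k r => if (k == T) && ~~ r then TxB else Unrel.

(** Take a miner [i] of minimal power [lam_min] and the subgame at round
    [T - 1] with the HTLC unredeemed.  Following the bribe there yields
    [lam_min * (f + fB)]; deviating by including [tx_A] in round [T - 1]
    yields [lam_min * (fA + lam_min * f) + (1 - lam_min) * lam_min * fB].
    The gain is [lam_min * (fA - f - lam_min * (fB - f))], which is positive
    because [fB <= vdep] and [fA - f > lam_min * (vdep - f)]. *)
From mathcomp Require Import all_boot all_order all_algebra.
From mathcomp Require Import reals.
From mathcomp Require Import ring lra.
Import Order.TTheory GRing.Theory Num.Theory.
Local Open Scope ring_scope.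

Lemma sum_mulr_if_eq (R : pzRingType) (n : nat) (lam : 'I_n -> R) (i : 'I_n)
    (a b : R) :
  \sum_(j < n) lam j = 1 ->
  \sum_(j < n) lam j * (if j == i then a else b) = lam i * a + (1 - lam i) * b.
Proof.
move=> lam_sum1.
have lam_sum_neq : \sum_(j < n | j != i) lam j = 1 - lam i.
  by rewrite -lam_sum1 [X in _ = X - _](bigD1 i) //= addrC addrK.
rewrite (bigD1 i) //= eqxx -lam_sum_neq big_distrl /=.
by congr (_ + _); apply: eq_bigr => j /negbTE ->.
Qed.

Section Value.

Variables (R : realType) (n : nat) (lam : 'I_n -> R) (f fA fB : R).
Hypothesis lam_sum1 : \sum_(j < n) lam j = 1.

Local Notation value := (value n lam f fA fB).
Local Notation fee := (fee f fA fB).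

Lemma value1 (sigma : profile n) (i : 'I_n) (k : nat) (r : bool) :
  value sigma i 1 k r = lam i * fee (sigma i k r).
Proof.
rewrite /= (bigD1 i) //= eqxx addr0 big1 ?addr0 // => j /negbTE ->.
by rewrite addr0 mulr0.
Qed.

Lemma valueS_deviator (sigma : profile n) (i : 'I_n) (m k : nat) (r : bool)
    (a b : act) :
  sigma i k r = b -> (forall j, j != i -> sigma j k r = a) ->
  value sigma i m.+1 k r =
    lam i * (fee b + value sigma i m k.+1 (next_state r b))
    + (1 - lam i) * value sigma i m k.+1 (next_state r a).
Proof.
move=> sigma_i sigma_others /=.
rewrite -(sum_mulr_if_eq _ _ _ i _ _ lam_sum1); apply: eq_bigr => j _.
by case: eqP => [->|/eqP /sigma_others ->]; rewrite ?sigma_i ?add0r.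
Qed.

Lemma valueS_uniform (sigma : profile n) (i : 'I_n) (m k : nat) (r : bool)
    (a : act) :
  (forall j, sigma j k r = a) ->
  value sigma i m.+1 k r =
    lam i * fee a + value sigma i m k.+1 (next_state r a).
Proof.
move=> sigma_a; rewrite (@valueS_deviator _ _ _ _ _ a a) //; ring.
Qed.

Section Preemption.

Variable T : nat.
Hypothesis T_gt0 : (0 < T)%N.

Let predT_neqT : (T.-1 == T) = false.
Proof. by rewrite ltn_eqF // ltn_predL. Qed.

Definition preempt : mstrat :=
  fun k r => if ~~ r && (k == T.-1) then TxA
             else if ~~ r && (k == T) then TxB else Unrel.

Lemma preempt_feasible : feasible_strat T preempt.
Proof.
move=> k [|]; rewrite /preempt //=.
by case: ifP => // _; case: ifP => //= ->.
Qed.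

Lemma bribe_value_predT (i : 'I_n) :
  value (bribe_profile n T) i 2 T.-1 false = lam i * (f + fB).
Proof.
rewrite (@valueS_uniform _ _ _ _ _ Unrel); last by rewrite /bribe_profile predT_neqT.
by rewrite prednK // value1 /bribe_profile eqxx /=; ring.
Qed.

Lemma preempt_value_predT (i : 'I_n) :
  value (deviate n (bribe_profile n T) i preempt) i 2 T.-1 false =
    lam i * (fA + lam i * f) + (1 - lam i) * (lam i * fB).
Proof.
rewrite (@valueS_deviator _ _ _ _ _ Unrel TxA); first last.
- by move=> j /negbTE j_neq_i; rewrite /deviate j_neq_i /bribe_profile predT_neqT.
- by rewrite /deviate eqxx /preempt eqxx.
rewrite prednK // !value1 /deviate eqxx /preempt /bribe_profile eqxx.
by rewrite eq_sym predT_neqT.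
Qed.

Lemma preempt_profitable (i : 'I_n) :
  0 < lam i -> lam i * (fB - f) < fA - f ->
  value (bribe_profile n T) i 2 T.-1 false
    < value (deviate n (bribe_profile n T) i preempt) i 2 T.-1 false.
Proof.
move=> lam_i_gt0 fA_large.
rewrite bribe_value_predT preempt_value_predT -subr_gt0.
have -> : lam i * (fA + lam i * f) + (1 - lam i) * (lam i * fB) - lam i * (f + fB)
          = lam i * (fA - f - lam i * (fB - f)) by ring.
by rewrite mulr_gt0 // subr_gt0.
Qed.

End Preemption.

End Value.

Theorem corollary2 (R : realType) (n T : nat) (lam : 'I_n -> R)
    (lam_min f fA fB vdep : R)
    (hlam_pos : forall i, 0 < lam i)
    (hlam_sum : \sum_(i < n) lam i = 1)
    (hlam_min : (exists i, lam i = lam_min) /\ (forall j, lam_min <= lam j))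
    (hT : (1 < T)%N)
    (hfB : fB <= vdep)
    (hfA : fA > lam_min * (vdep - f) + f) :
  ~ is_SPE n T lam f fA fB (bribe_profile n T).
Proof.
case=> _ bribe_best; have [[i lam_i] _] := hlam_min.
have T_gt0 : (0 < T)%N by apply: ltnW.
have predT_round : (1 <= T.-1 <= T)%N by rewrite -ltnS prednK // hT leq_pred.
have := bribe_best _ false predT_round (orbT _) i _ (preempt_feasible T).
have -> : (T - T.-1).+1 = 2%N by rewrite -subn1 subKn.
apply/negP; rewrite -ltNge; apply: preempt_profitable => //.
have lam_i_gt0 := hlam_pos i; rewrite lam_i in lam_i_gt0 *.
have fB_gain : lam_min * (fB - f) <= lam_min * (vdep - f).
  by rewrite ler_wpM2l ?lerD2r // ltW.
lra.
Qed.
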